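(* Let $\mathbf{A}$ be an algebra and let $e$ be an idempotent unary term of $\mathbf{A}$. Then $e$ separates $\mathbf{A}$ if and only if both of the following hold: (1) every isomorphism between subalgebras of $\mathbf{A}$ whose restriction to $e(A)$ is the identity map is the identity on its domain; and (2) every congruence on a subalgebra of $\mathbf{A}$ whose restriction to $e(A)$ is the equality relation is itself the equality relation.
   Context: A unary term $e$ of an algebra $\mathbf{A}$ is idempotent if $\mathbf{A}\models e(e(x))=e(x)$. The set $e(A)$ is then called a neighborhood of $\mathbf{A}$. We say $e$ separates $\mathbf{A}$ (is separating for $\mathbf{A}$) if for all $a\neq b$ in $A$ there is a unary term $g$ of $\mathbf{A}$ with $e(g(a))\neq e(g(b))$. *)

From mathcomp Require Import all_boot.
Set Implicit Arguments. Unset Strict Implicit. Unset Printing Implicit Defensive.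

Record algebra := Algebra {
  carrier :> Type;
  sym : Type;
  arity : sym -> nat;
  op : forall s : sym, ('I_(arity s) -> carrier) -> carrier
}.
Arguments op {a} s _.

Section Defs.
Variable A : algebra.

Inductive unary_term : (A -> A) -> Prop :=
| ut_var : unary_term (fun x => x)
| ut_op (s : sym A) (g : 'I_(arity s) -> (A -> A)) :
    (forall i, unary_term (g i)) ->
    unary_term (fun x => op s (fun i => g i x)).

Definition idempotent_term (e : A -> A) : Prop :=
  unary_term e /\ forall x, e (e x) = e x.

Definition nbhd (e : A -> A) (x : A) : Prop := exists a, x = e a.

Definition separates (e : A -> A) : Prop :=
  forall a b : A, a <> b -> exists g, unary_term g /\ e (g a) <> e (g b).

Definition subalgebra (B : A -> Prop) : Prop :=
  forall (s : sym A) (args : 'I_(arity s) -> A),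
    (forall i, B (args i)) -> B (op s args).

(* h : A -> A, restricted to B, is an isomorphism from the subalgebra B
   onto the subalgebra C *)
Definition sub_iso (B C : A -> Prop) (h : A -> A) : Prop :=
  [/\ forall x, B x -> C (h x),
      forall x y, B x -> B y -> h x = h y -> x = y,
      forall y, C y -> exists2 x, B x & h x = y &
      forall (s : sym A) (args : 'I_(arity s) -> A),
        (forall i, B (args i)) -> h (op s args) = op s (fun i => h (args i))].

Definition sub_congruence (B : A -> Prop) (theta : A -> A -> Prop) : Prop :=
  [/\ forall x y, theta x y -> B x /\ B y,
      forall x, B x -> theta x x,
      forall x y, theta x y -> theta y x,
      forall x y z, theta x y -> theta y z -> theta x z &
      forall (s : sym A) (a b : 'I_(arity s) -> A),
        (forall i, theta (a i) (b i)) -> theta (op s a) (op s b)].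

End Defs.

(* Forward: a unary term g with e (g a) <> e (g b) is preserved by every
   isomorphism and every congruence, so one fixing e(A) or trivial on e(A)
   cannot move or identify a and b.
   Backward: if a <> b are not separated, then e (t a) = e (t b) for all
   unary terms t.  The transitive closure of "t a ~ t' a whenever t b = t' b"
   is a congruence of Sg(a) that is trivial on e(A); by (2) it is equality,
   and symmetrically with a and b swapped, so t a |-> t b is a well-defined
   isomorphism Sg(a) -> Sg(b).  It fixes e(A), since t a = e (t a) there, so
   by (1) it fixes a, i.e. a = b. *)
From Stdlib Require Import Classical ClassicalEpsilon FunctionalExtensionality Relations.
From mathcomp Require Import all_boot.
Set Implicit Arguments. Unset Strict Implicit.

Section UnaryTerms.
Variable A : algebra.

Lemma unary_term_comp (f g : A -> A) :
  unary_term f -> unary_term g -> unary_term (fun x => f (g x)).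
Proof.
move=> uf ug; elim: uf => [|s h _ IH] //=.
by apply: ut_op => i; exact: IH.
Qed.

Lemma subalgebra_unary_term (B : A -> Prop) (g : A -> A) x :
  subalgebra B -> B x -> unary_term g -> B (g x).
Proof.
move=> subB Bx; elim=> [|s h _ IH] //=.
by apply: (subB s (fun i => h i x)) => i; exact: IH.
Qed.

Definition compatible (r : A -> A -> Prop) : Prop :=
  forall (s : sym A) (x y : 'I_(arity s) -> A),
    (forall i, r (x i) (y i)) -> r (op s x) (op s y).

Lemma compatible_unary_term (r : A -> A -> Prop) (g : A -> A) x y :
  compatible r -> r x y -> unary_term g -> r (g x) (g y).
Proof.
move=> r_comp rxy; elim=> [|s h _ IH] //=.
by apply: (r_comp s (fun i => h i x) (fun i => h i y)) => i; exact: IH.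
Qed.

Definition hom_on (B : A -> Prop) (h : A -> A) : Prop :=
  forall (s : sym A) (args : 'I_(arity s) -> A),
    (forall i, B (args i)) -> h (op s args) = op s (fun i => h (args i)).

Lemma hom_unary_term (B : A -> Prop) (h g : A -> A) x :
  subalgebra B -> hom_on B h -> B x -> unary_term g -> h (g x) = g (h x).
Proof.
move=> subB h_hom Bx; elim=> [|s f uf IH] //=.
rewrite h_hom; last by move=> i; exact: subalgebra_unary_term (uf i).
by congr (op s); apply: functional_extensionality => i; exact: IH.
Qed.

Definition Sg (a x : A) : Prop := exists2 t, unary_term t & x = t a.

Lemma Sg_choice (a : A) n (x : 'I_n -> A) : (forall i, Sg a (x i)) ->
  exists2 t : 'I_n -> A -> A, forall i, unary_term (t i) & forall i, x i = t i a.
Proof.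
move=> Sgx; have [t Ht] := choice (fun i t => unary_term t /\ x i = t a) (fun i =>
  let: ex_intro2 t ut Et := Sgx i in ex_intro _ t (conj ut Et)).
by exists t => i; case: (Ht i).
Qed.

Lemma subalgebra_Sg (a : A) : subalgebra (Sg a).
Proof.
move=> s x /Sg_choice [t ut Et]; exists (fun y => op s (fun i => t i y)).
  exact: ut_op.
by congr (op s); apply: functional_extensionality.
Qed.

Section TransitiveClosure.
Variables (B : A -> Prop) (r : A -> A -> Prop).
Hypotheses (r_refl : forall x, B x -> r x x)
           (r_dom : forall x y, r x y -> B x /\ B y)
           (r_comp : compatible r).

Let rt := clos_trans A r.

Lemma clos_trans_dom x y : rt x y -> B x /\ B y.
Proof. by elim=> [u v /r_dom|u v w _ [Bu _] _ [_ Bw]]. Qed.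

Let update n (f : 'I_n -> A) (k : 'I_n) (v : A) :=
  fun j => if j == k then v else f j.

Lemma clos_trans_op_update s (k : 'I_(arity s)) u v : rt u v ->
  forall f, (forall j, B (f j)) -> f k = u -> rt (op s f) (op s (update f k v)).
Proof.
elim=> [{}u {}v ruv|{}u w {}v ruw IH1 _ IH2] f Bf fk.
  apply: t_step; apply: r_comp => j; rewrite /update.
  by case: eqP => [->|_]; [rewrite fk | exact: r_refl].
apply: t_trans (IH1 f Bf fk) _.
have -> : update f k v = update (update f k w) k v.
  by apply: functional_extensionality => j; rewrite /update; case: eqP.
have [_ Bw] := clos_trans_dom ruw.
apply: IH2; last by rewrite /update eqxx.
by move=> j; rewrite /update; case: (j == k).
Qed.

Lemma compatible_clos_trans : compatible rt.
Proof.
move=> s x y rxy.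
pose mix m (j : 'I_(arity s)) := if (j < m)%N then y j else x j.
have Bmix m j : B (mix m j).
  by rewrite /mix; case: ifP => _; have [] := clos_trans_dom (rxy j).
suff /(_ (arity s) (leqnn _)) : forall m, (m <= arity s)%N -> rt (op s x) (op s (mix m)).
  have -> // : mix (arity s) = y.
  by apply: functional_extensionality => j; rewrite /mix ltn_ord.
elim=> [_|m IH lt_m].
  apply: t_step; apply: r_comp => j; rewrite /mix /=.
  by apply: r_refl; have [] := clos_trans_dom (rxy j).
apply: t_trans (IH (ltnW lt_m)) _.
have -> : mix m.+1 = update (mix m) (Ordinal lt_m) (y (Ordinal lt_m)).
  apply: functional_extensionality => j; rewrite /mix /update ltnS.
  case: eqVneq => [-> /=|ne]; first by rewrite leqnn.
  by have /negPf jm : j != m :> nat := ne; rewrite leq_eqVlt jm.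
by apply: (@clos_trans_op_update s (Ordinal lt_m) (x (Ordinal lt_m))) => //;
  rewrite /mix ltnn.
Qed.

End TransitiveClosure.

(* Relates t a and t' a whenever t b = t' b: the kernel of the correspondence
   t a |-> t b, which is a function exactly when this relation is equality. *)
Definition kernel_rel (a b x y : A) : Prop :=
  exists t t', [/\ unary_term t, unary_term t', x = t a, y = t' a & t b = t' b].

Section KernelRel.
Variables a b : A.

Lemma kernel_rel_Sg x y : kernel_rel a b x y -> Sg a x /\ Sg a y.
Proof. by move=> [t [t' [ut ut' -> -> _]]]; split; [exists t | exists t']. Qed.

Lemma kernel_rel_refl x : Sg a x -> kernel_rel a b x x.
Proof. by move=> [t ut ->]; exists t, t. Qed.

Lemma kernel_rel_sym x y : kernel_rel a b x y -> kernel_rel a b y x.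
Proof. by move=> [t [t' [ut ut' -> -> E]]]; exists t', t. Qed.

Lemma kernel_rel_compatible : compatible (kernel_rel a b).
Proof.
move=> s x y xy.
pose tied i (p : (A -> A) * (A -> A)) :=
  [/\ unary_term p.1, unary_term p.2, x i = p.1 a, y i = p.2 a & p.1 b = p.2 b].
have [p Hp] : exists p, forall i, tied i (p i).
  by apply: choice => i; have [t [t' H]] := xy i; exists (t, t').
exists (fun z => op s (fun i => (p i).1 z)), (fun z => op s (fun i => (p i).2 z)).
split; try by apply: (ut_op (fun i => _)) => i; case: (Hp i).
all: by congr (op s); apply: functional_extensionality => i; case: (Hp i).
Qed.

Lemma sub_congruence_kernel_rel : sub_congruence (Sg a) (clos_trans A (kernel_rel a b)).
Proof.
split.
- exact: clos_trans_dom kernel_rel_Sg.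
- by move=> x Sx; apply: t_step; exact: kernel_rel_refl.
- move=> x y; elim=> [{}x {}y xy|{}x z {}y _ IHxz _ IHzy].
    exact/t_step/kernel_rel_sym.
  exact: t_trans IHzy IHxz.
- exact: t_trans.
- exact: compatible_clos_trans kernel_rel_refl kernel_rel_Sg kernel_rel_compatible.
Qed.

Lemma kernel_rel_e (e : A -> A) x y :
  (forall g, unary_term g -> e (g a) = e (g b)) ->
  clos_trans A (kernel_rel a b) x y -> e x = e y.
Proof.
move=> eab; elim=> [{}x {}y [t [t' [ut ut' -> -> E]]]|{}x z {}y _ -> _ ->] //.
by rewrite (eab _ ut) (eab _ ut') E.
Qed.

End KernelRel.

(* The candidate isomorphism Sg(a) -> Sg(b), t a |-> t b. *)
Definition transfer (a b x : A) : A :=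
  epsilon (inhabits b) (fun y => exists2 t, unary_term t & x = t a /\ y = t b).

Section Transfer.
Variables a b : A.
Hypothesis transfer_wd : forall t t', unary_term t -> unary_term t' ->
  t a = t' a -> t b = t' b.

Lemma transferE t : unary_term t -> transfer a b (t a) = t b.
Proof.
move=> ut; rewrite /transfer.
have /(epsilon_spec (inhabits b)) [u uu [Eu ->]] :
  exists y, exists2 u, unary_term u & t a = u a /\ y = u b by exists (t b), t.
exact: transfer_wd.
Qed.

Hypothesis transfer_inj : forall t t', unary_term t -> unary_term t' ->
  t b = t' b -> t a = t' a.

Lemma sub_iso_transfer : sub_iso (Sg a) (Sg b) (transfer a b).
Proof.
split.
- by move=> _ [t ut ->]; rewrite transferE //; exists t.
- by move=> _ _ [t ut ->] [t' ut' ->]; rewrite !transferE //; exact: transfer_inj.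
- by move=> _ [t ut ->]; exists (t a); [exists t | rewrite transferE].
move=> s x /Sg_choice [t ut Et].
have -> : x = fun i => t i a by apply: functional_extensionality.
rewrite (transferE (ut_op ut)); congr (op s).
by apply: functional_extensionality => i; rewrite transferE.
Qed.

End Transfer.

Definition sub_iso_rigid (e : A -> A) : Prop :=
  forall (B C : A -> Prop) (h : A -> A),
    subalgebra B -> subalgebra C -> sub_iso B C h ->
    (forall x, B x -> nbhd e x -> h x = x) -> forall x, B x -> h x = x.

Definition sub_congruence_rigid (e : A -> A) : Prop :=
  forall (B : A -> Prop) (theta : A -> A -> Prop),
    subalgebra B -> sub_congruence B theta ->
    (forall x y, nbhd e x -> nbhd e y -> theta x y -> x = y) ->
    forall x y, theta x y -> x = y.

Section Separation.
Variable e : A -> A.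
Hypothesis e_idem : idempotent_term e.

Lemma nbhd_fixed x : nbhd e x -> e x = x.
Proof. by move=> [y ->]; rewrite e_idem.2. Qed.

Lemma separates_hom_fixed (B : A -> Prop) (h : A -> A) :
  separates e -> subalgebra B -> hom_on B h ->
  (forall x, B x -> nbhd e x -> h x = x) -> forall x, B x -> h x = x.
Proof.
move=> sep subB h_hom h_fix x Bx; apply: NNPP => /sep [g [ug []]].
have ueg := unary_term_comp e_idem.1 ug.
rewrite -(hom_unary_term subB h_hom Bx ueg) h_fix //.
  exact: subalgebra_unary_term ueg.
by exists (g x).
Qed.

Lemma separates_compatible_eq (theta : A -> A -> Prop) :
  separates e -> compatible theta ->
  (forall x y, nbhd e x -> nbhd e y -> theta x y -> x = y) ->
  forall x y, theta x y -> x = y.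
Proof.
move=> sep theta_comp theta_nbhd x y xy; apply: NNPP => /sep [g [ug []]].
apply: theta_nbhd; [by exists (g x) | by exists (g y) |].
exact: compatible_unary_term theta_comp xy (unary_term_comp e_idem.1 ug).
Qed.

Lemma unseparated_term_inj a b t t' : sub_congruence_rigid e ->
  (forall g, unary_term g -> e (g a) = e (g b)) ->
  unary_term t -> unary_term t' -> t b = t' b -> t a = t' a.
Proof.
move=> rigid eab ut ut' E.
apply: (rigid _ _ (@subalgebra_Sg a) (sub_congruence_kernel_rel a b)).
  by move=> x y /nbhd_fixed ex /nbhd_fixed ey /(kernel_rel_e eab); rewrite ex ey.
by apply: t_step; exists t, t'.
Qed.

Lemma rigid_separates : sub_iso_rigid e -> sub_congruence_rigid e -> separates e.
Proof.
move=> iso_rigid cong_rigid a b neq_ab; apply: NNPP => unsep.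
have eab g : unary_term g -> e (g a) = e (g b).
  by move=> ug; apply: NNPP => neq; apply: unsep; exists g.
have eba g : unary_term g -> e (g b) = e (g a) by move=> ug; rewrite eab.
have inj_ab := unseparated_term_inj cong_rigid eab.
have inj_ba := unseparated_term_inj cong_rigid eba.
apply: neq_ab; rewrite -[b](transferE inj_ba (ut_var A)).
symmetry; apply: (iso_rigid _ _ _ (@subalgebra_Sg a) (@subalgebra_Sg b)).
- exact: sub_iso_transfer.
- move=> _ [t ut ->] /nbhd_fixed <-.
  have uet := unary_term_comp e_idem.1 ut.
  by rewrite (transferE inj_ba uet) /= eab.
- by exists id => //; exact: ut_var.
Qed.

End Separation.
End UnaryTerms.

Theorem lemma2p1 (A : algebra) (e : A -> A) :
  idempotent_term e ->
  (separates e <->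
   ((forall (B C : A -> Prop) (h : A -> A),
       subalgebra B -> subalgebra C -> sub_iso B C h ->
       (forall x, B x -> nbhd e x -> h x = x) ->
       forall x, B x -> h x = x) /\
    (forall (B : A -> Prop) (theta : A -> A -> Prop),
       subalgebra B -> sub_congruence B theta ->
       (forall x y, nbhd e x -> nbhd e y -> theta x y -> x = y) ->
       forall x y, theta x y -> x = y))).
Proof.
move=> e_idem; split; last by case; exact: rigid_separates.
move=> sep; split.
- by move=> B C h subB _ [_ _ _ h_hom]; exact: separates_hom_fixed.
- by move=> B theta _ [_ _ _ _ theta_comp]; exact: separates_compatible_eq.
Qed.
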